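(* Fix an integer $t\ge1$ and $\delta\in[0,1)$. For every finite binary input sequence $x$ and all binary sequences $y^1,\dots,y^t$, $$\Pr(Y^1=y^1,\dots,Y^t=y^t\mid X=x)=\Pr(\tilde Y^1=y^1,\dots,\tilde Y^t=y^t\mid X=x),$$ where $(Y^1,\dots,Y^t)$ are the outputs of the $t$-trace deletion channel on input $X$, and $(\tilde Y^1,\dots,\tilde Y^t)$ are the outputs of the cascade in which $X$ is first passed through a deletion channel with deletion probability $\delta^t$, producing $Z$, and then $Z$ is passed through the remnant channel with parameter $\delta$ (with $t$ outputs).
   Context: A deletion channel with deletion probability $q$ deletes each input symbol independently with probability $q$ and outputs the subsequence of undeleted symbols. The $t$-trace deletion channel passes the same input $X$ through $t$ independent deletion channels each with deletion probability $\delta$, giving outputs $Y^1,\dots,Y^t$. The remnant channel with parameter $\delta$ and $t$ outputs acts independently on each input symbol: for each nonempty subset $S\subseteq\{1,\dots,t\}$, with probability $\frac{\delta^{t-|S|}(1-\delta)^{|S|}}{1-\delta^t}$ the symbol is kept (in order) in exactly the outputs indexed by $S$ and deleted from the others; its outputs are $\tilde Y^1,\dots,\tilde Y^t$. In the cascade, the remnant channel acts independently of the first deletion channel given its input. *)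

From HB Require Import structures.
From mathcomp Require Import all_boot all_order all_algebra.
Set Implicit Arguments. Unset Strict Implicit. Unset Printing Implicit Defensive.
Import Order.TTheory GRing.Theory Num.Theory.
Local Open Scope ring_scope.

Definition del_w (R : realFieldType) (q : R) (n : nat) (m : n.-tuple bool) : R :=
  \prod_(i < n) (if tnth m i then 1 - q else q).

(* Pr(Y^1=y 0,...,Y^t=y (t-1) | X = x) for the t-trace deletion channel:
   t independent deletion patterns, output j is mask (m j) x. *)
Definition trace_prob (R : realFieldType) (t : nat) (delta : R)
    (x : seq bool) (y : 'I_t -> seq bool) : R :=
  \sum_(m : {ffun 'I_t -> (size x).-tuple bool}
          | [forall j, mask (m j) x == y j])
     \prod_(j < t) del_w delta (m j).

(* Probability that the remnant channel sends a symbol to exactly the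
   outputs indexed by the nonempty set S. *)
Definition rem_w (R : realFieldType) (t : nat) (delta : R) (S : {set 'I_t}) : R :=
  delta ^+ (t - #|S|) * (1 - delta) ^+ #|S| / (1 - delta ^+ t).

(* Pr(remnant outputs = y | input z): each symbol i of z is independently
   assigned a nonempty set s_i of outputs; output j keeps the symbols i
   with j \in s_i, in order. *)
Definition rem_prob (R : realFieldType) (t : nat) (delta : R)
    (z : seq bool) (y : 'I_t -> seq bool) : R :=
  \sum_(s : (size z).-tuple {set 'I_t}
          | [forall i, tnth s i != set0] &&
            [forall j, mask [seq (j \in A) | A : {set 'I_t} <- (s : seq {set 'I_t})] z == y j])
     \prod_(i < size z) rem_w delta (tnth s i).

(* Cascade: X through deletion channel with deletion prob delta^t giving
   Z = mask k x, then Z through the remnant channel (independently given Z). *)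
Definition cascade_prob (R : realFieldType) (t : nat) (delta : R)
    (x : seq bool) (y : 'I_t -> seq bool) : R :=
  \sum_(k : (size x).-tuple bool)
     del_w (delta ^+ t) k * rem_prob delta (mask k x) y.

(** Both channels act independently on the input symbols, so it suffices to
    compare what happens to a single symbol: in the t-trace channel it reaches
    exactly the traces in S with probability [delta^(t-|S|) (1-delta)^|S|].
    In the cascade it is deleted with probability [delta^t] (the case S = set0)
    and otherwise reaches the nonempty S with probability
    [(1 - delta^t) * rem_w delta S], which is the same number.  Peeling off the
    first input symbol therefore gives the same recursion for both sides. *)
From HB Require Import structures.
From mathcomp Require Import all_boot all_order all_algebra.
From Stdlib Require Import FunctionalExtensionality.

Set Implicit Arguments.
Unset Strict Implicit.
Unset Printing Implicit Defensive.
Import Order.TTheory GRing.Theory Num.Theory.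
Local Open Scope ring_scope.

Lemma forallb_and (I : finType) (P Q : pred I) :
  [forall i, P i && Q i] = [forall i, P i] && [forall i, Q i].
Proof.
apply/forallP/andP => [PQ | [/forallP P_ /forallP Q_] i]; last by rewrite P_ Q_.
by split; apply/forallP => i; case/andP: (PQ i).
Qed.

Lemma mask_cons_eq (T : eqType) (c : bool) (m : bitseq) (b : T) (x y : seq T) :
  (mask (c :: m) (b :: x) == y) =
  (c ==> (y == b :: behead y)) && (mask m x == if c then behead y else y).
Proof.
by case: c; case: y => [|a y] //=; rewrite ?eqseq_cons ?eqxx ?andbT // eq_sym.
Qed.

Lemma forall_tnth_cons (T : Type) n (P : pred T) a (s : n.-tuple T) :
  [forall i, P (tnth [tuple of a :: s] i)] = P a && [forall i, P (tnth s i)].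
Proof.
apply/forallP/andP => [Ps | [Pa /forallP Ps] i].
  by split; [have := Ps ord0 | apply/forallP => i; have := Ps (lift ord0 i)];
    rewrite ?tnth0 ?tnthS.
by case: (unliftP ord0 i) => [j ->|->]; rewrite ?tnthS ?tnth0.
Qed.

Section TupleSums.
Variable R : nmodType.

Lemma big_tuple_cons (T : finType) n (F : n.+1.-tuple T -> R) :
  \sum_(u : n.+1.-tuple T) F u =
  \sum_(a : T) \sum_(u : n.-tuple T) F [tuple of a :: u].
Proof.
rewrite pair_big (reindex (fun p : T * n.-tuple T => [tuple of p.1 :: p.2])) //=.
exists (fun u : n.+1.-tuple T => (thead u, [tuple of behead u])) => [[a u] _ | u _].
  by rewrite theadE; congr pair; apply: val_inj.
by rewrite [RHS]tuple_eta.
Qed.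

Lemma big_ffun_tuple_cons (I : finType) n (F : {ffun I -> n.+1.-tuple bool} -> R) :
  \sum_(m : {ffun I -> n.+1.-tuple bool}) F m =
  \sum_(S : {set I}) \sum_(m : {ffun I -> n.-tuple bool})
     F [ffun j => [tuple of (j \in S) :: m j]].
Proof.
rewrite pair_big (reindex (fun p : {set I} * {ffun I -> n.-tuple bool} =>
   [ffun j => [tuple of (j \in p.1) :: p.2 j]])) //=.
exists (fun m : {ffun I -> n.+1.-tuple bool} =>
   ([set j | thead (m j)], [ffun j => [tuple of behead (m j)]])) => [[S m] _ | m _].
  congr pair; first by apply/setP => j; rewrite inE ffunE theadE.
  by apply/ffunP => j; rewrite !ffunE; apply: val_inj.
by apply/ffunP => j; rewrite !ffunE inE [RHS]tuple_eta; apply: val_inj.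
Qed.

End TupleSums.

Definition heads_at (I : finType) (T : eqType) (S : {set I}) (y : I -> seq T) b :=
  [forall j in S, y j == b :: behead (y j)].

Definition behead_at (I : finType) (T : Type) (S : {set I}) (y : I -> seq T) :=
  fun j => if j \in S then behead (y j) else y j.

Lemma forall_mask_cons (I : finType) (T : eqType) (S : {set I}) (m : I -> bitseq)
    (b : T) (x : seq T) (y : I -> seq T) :
  [forall j, mask ((j \in S) :: m j) (b :: x) == y j] =
  heads_at S y b && [forall j, mask (m j) x == behead_at S y j].
Proof. by rewrite -forallb_and; apply: eq_forallb => j; rewrite mask_cons_eq. Qed.

Lemma heads_at0 (I : finType) (T : eqType) (y : I -> seq T) b : heads_at set0 y b.
Proof. by apply/forall_inP => j; rewrite in_set0. Qed.

Lemma behead_at0 (I : finType) (T : Type) (y : I -> seq T) : behead_at set0 y = y.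
Proof. by apply: functional_extensionality => j; rewrite /behead_at in_set0. Qed.

Section SingleSymbol.
Variables (R : realFieldType) (t : nat).
Implicit Types (d : R) (S : {set 'I_t}).

Definition keep_w d S : R := \prod_(j < t) (if j \in S then 1 - d else d).

Lemma keep_wE d S : keep_w d S = d ^+ (t - #|S|) * (1 - d) ^+ #|S|.
Proof.
have -> : (t - #|S| = #|~: S|)%N by rewrite [RHS]cardsCs setCK card_ord.
rewrite /keep_w (bigID (mem S)) /= mulrC.
rewrite [X in X * _](eq_bigr (fun=> d)) => [|j /negbTE -> //].
rewrite [X in _ * X](eq_bigr (fun=> 1 - d)) => [|j -> //].
rewrite (eq_bigl [in ~: S]) => [|j]; last by rewrite in_setC.
by rewrite !prodr_const.
Qed.

Lemma keep_w0 d : keep_w d set0 = d ^+ t.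
Proof. by rewrite keep_wE cards0 subn0 mulr1. Qed.

Lemma cascade_symbol_mixture d (F : {set 'I_t} -> R) :
  1 - d ^+ t != 0 ->
  d ^+ t * F set0 + (1 - d ^+ t) * \sum_(S | S != set0) rem_w d S * F S =
  \sum_S keep_w d S * F S.
Proof.
move=> nz_dt; rewrite [RHS](bigD1 set0) //= keep_w0 mulr_sumr; congr (_ + _).
apply: eq_bigr => S _; rewrite mulrA keep_wE /rem_w; congr (_ * _).
by rewrite mulrC divfK.
Qed.

End SingleSymbol.

Lemma del_w_cons (R : realFieldType) (q : R) n c (u : n.-tuple bool) :
  del_w q [tuple of c :: u] = (if c then 1 - q else q) * del_w q u.
Proof.
by rewrite /del_w big_ord_recl tnth0; congr (_ * _); apply: eq_bigr => i _; rewrite tnthS.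
Qed.

Lemma del_w_nil (R : realFieldType) (q : R) (u : 0.-tuple bool) : del_w q u = 1.
Proof. exact: big_ord0. Qed.

Section Channels.
Variables (R : realFieldType) (t : nat) (d : R).

Lemma trace_prob_nil (y : 'I_t -> seq bool) :
  trace_prob d [::] y = [forall j, [::] == y j]%:R.
Proof.
rewrite /trace_prob big_mkcond /=.
under eq_bigr => m _ do under eq_forallb => j do rewrite mask0.
under eq_bigr => m _ do under eq_bigr => j _ do rewrite del_w_nil.
rewrite big1_eq sumr_const card_ffun card_tuple exp1n.
by case: [forall j, _].
Qed.

Lemma trace_prob_cons b x (y : 'I_t -> seq bool) :
  trace_prob d (b :: x) y =
  \sum_(S : {set 'I_t}) keep_w d S *
     (if heads_at S y b then trace_prob d x (behead_at S y) else 0).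
Proof.
rewrite /trace_prob big_mkcond /= big_ffun_tuple_cons; apply: eq_bigr => S _.
have mask_heads (m : {ffun 'I_t -> (size x).-tuple bool}) :
    [forall j, mask ([ffun j => [tuple of (j \in S) :: m j]] j) (b :: x) == y j] =
    heads_at S y b && [forall j, mask (m j) x == behead_at S y j].
  by rewrite -forall_mask_cons; apply: eq_forallb => j; rewrite ffunE.
case: (boolP (heads_at S y b)) => [hS | nhS]; last first.
  by rewrite mulr0 big1 // => m _; rewrite mask_heads (negbTE nhS).
rewrite mulr_sumr [RHS]big_mkcond; apply: eq_bigr => m _ /=.
rewrite mask_heads hS /=; case: ifP => _ //; rewrite /keep_w -big_split /=.
by apply: eq_bigr => j _; rewrite ffunE del_w_cons.
Qed.

Lemma rem_prob_nil (y : 'I_t -> seq bool) :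
  rem_prob d [::] y = [forall j, [::] == y j]%:R.
Proof.
rewrite /rem_prob big_mkcond /=.
rewrite (eq_bigr (fun=> [forall j, [::] == y j]%:R)) => [|s _].
  by rewrite sumr_const card_tuple expn0.
have -> /= : [forall i, tnth s i != set0] by apply/forallP => -[].
under eq_forallb => j do rewrite mask0.
by rewrite big_ord0; case: ifP.
Qed.

Lemma rem_prob_cons b z (y : 'I_t -> seq bool) :
  rem_prob d (b :: z) y =
  \sum_(S : {set 'I_t} | S != set0) rem_w d S *
     (if heads_at S y b then rem_prob d z (behead_at S y) else 0).
Proof.
have nonempty_cons := forall_tnth_cons (fun B : {set 'I_t} => B != set0).
rewrite /rem_prob big_mkcond [RHS]big_mkcond /= big_tuple_cons.
apply: eq_bigr => S _.
case: (boolP (S != set0)) => [nzS | zS]; last first.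
  by apply: big1 => s _; rewrite nonempty_cons (negbTE zS).
case: (boolP (heads_at S y b)) => [hS | nhS]; last first.
  by rewrite mulr0 big1 // => s _ /=; rewrite forall_mask_cons (negbTE nhS) andbF.
rewrite mulr_sumr [RHS]big_mkcond; apply: eq_bigr => s _ /=.
rewrite nonempty_cons forall_mask_cons nzS hS /=.
case: ifP => _ //; rewrite big_ord_recl tnth0; congr (_ * _).
by apply: eq_bigr => i _; rewrite tnthS.
Qed.

Lemma cascade_prob_nil (y : 'I_t -> seq bool) :
  cascade_prob d [::] y = [forall j, [::] == y j]%:R.
Proof.
rewrite /cascade_prob (eq_bigr (fun=> [forall j, [::] == y j]%:R)) => [|k _].
  by rewrite sumr_const card_tuple expn0.
by rewrite del_w_nil mul1r mask0 rem_prob_nil.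
Qed.

Lemma cascade_prob_cons b x (y : 'I_t -> seq bool) :
  1 - d ^+ t != 0 ->
  cascade_prob d (b :: x) y =
  \sum_(S : {set 'I_t}) keep_w d S *
     (if heads_at S y b then cascade_prob d x (behead_at S y) else 0).
Proof.
move=> nz_dt; rewrite -cascade_symbol_mixture // heads_at0 behead_at0.
rewrite /cascade_prob big_tuple_cons big_bool /= addrC; congr (_ + _).
  by rewrite mulr_sumr; apply: eq_bigr => k _; rewrite del_w_cons mulrA.
under eq_bigr => k _ do rewrite del_w_cons rem_prob_cons -mulrA mulr_sumr.
rewrite -mulr_sumr exchange_big; congr (_ * _); apply: eq_bigr => S _.
case: (heads_at S y b); last by rewrite mulr0 big1 // => k _; rewrite !mulr0.
by rewrite mulr_sumr; apply: eq_bigr => k _; rewrite mulrCA.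
Qed.

End Channels.

Theorem theorem3 (R : realFieldType) (t : nat) (delta : R)
  (ht : (0 < t)%N) (hd0 : 0 <= delta) (hd1 : delta < 1)
  (x : seq bool) (y : 'I_t -> seq bool) :
  trace_prob delta x y = cascade_prob delta x y.
Proof.
have nz_dt : 1 - delta ^+ t != 0.
  by rewrite subr_eq0 eq_sym lt_eqF // exprn_ilt1 // -lt0n.
elim: x y => [|b x IHx] y; first by rewrite trace_prob_nil cascade_prob_nil.
rewrite trace_prob_cons cascade_prob_cons //.
by apply: eq_bigr => S _; rewrite IHx.
Qed.
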